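(* Let $J:[0,1]\to[0,\infty)$ with $\int_{\mathbb{Z}_p}J(|x|_p)dx=1$ (extended by zero outside $\mathbb{Z}_p$) and $\boldsymbol{J}\varphi=J(|x|_p)\ast\varphi-\varphi$. For $l\ge1$ let $G_l=\mathbb{Z}_p/p^l\mathbb{Z}_p$ and let $\mathcal{D}_l(\mathbb{Z}_p)$ be the complex vector space spanned by $\{\Omega(p^l|x-I|_p)\}_{I\in G_l}$. Then $\boldsymbol{J}:\mathcal{D}_l(\mathbb{Z}_p)\to\mathcal{D}_l(\mathbb{Z}_p)$ is a well-defined operator, and, identifying $\varphi\in\mathcal{D}_l(\mathbb{Z}_p)$ with the column vector $[\varphi(I)]_{I\in G_l}$, the restriction of $\boldsymbol{J}$ to $\mathcal{D}_l(\mathbb{Z}_p)$ is given by the matrix $\boldsymbol{J}^{(l)}=[J^{(l)}_{I,K}]_{I,K\in G_l}$ with $J^{(l)}_{I,K}=p^{-l}J(|I-K|_p)$ if $I\neq K$, and $J^{(l)}_{I,I}=\int_{p^l\mathbb{Z}_p}J(|y|_p)dy-1$.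
   Context: $p$ is a fixed prime; Haar measure with $\int_{\mathbb{Z}_p}dx=1$. Elements of $G_l$ are represented by $p$-adic integers $I=I_0+I_1p+\dots+I_{l-1}p^{l-1}$, $I_j\in\{0,\dots,p-1\}$, and $\Omega(p^l|x-I|_p)$ is the characteristic function of the ball $I+p^l\mathbb{Z}_p$. *)

From HB Require Import structures.
From mathcomp Require Import all_boot all_order all_algebra.
From mathcomp Require Import all_classical all_reals all_analysis.
From mathcomp Require Import complex.
Set Implicit Arguments. Unset Strict Implicit. Unset Printing Implicit Defensive.
Import Order.TTheory GRing.Theory Num.Theory.
Local Open Scope classical_set_scope.
Local Open Scope ring_scope.
Local Open Scope complex_scope.

(* p-adic digits {0,...,p-1}; for p prime, p.-1.+1 = p. *)
Definition digit (p : nat) : Type := 'I_p.-1.+1.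

(* Z_p as the space of digit expansions x = x_0 + x_1 p + x_2 p^2 + ... *)
Definition Zpadic (p : nat) : Type := nat -> digit p.
HB.instance Definition _ p := Choice.on (Zpadic p).
HB.instance Definition _ p := isPointed.Build (Zpadic p) (fun _ => ord0).

Definition Zp0 (p : nat) : Zpadic p := fun _ => ord0.

Definition congr_upto (p : nat) (x y : Zpadic p) (n : nat) : Prop :=
  forall j, (j < n)%N -> x j = y j.

(* |x - y|_p = p^{-ord(x-y)}, ord(x-y) = sup {n | x = y mod p^n};
   written as inf {p^{-n} | x = y mod p^n} (equals 0 iff x = y). *)
Definition padic_absdiff (R : realType) (p : nat) (x y : Zpadic p) : R :=
  inf [set (p%:R ^- n : R) | n in [set n | congr_upto x y n]].

Definition padic_abs (R : realType) (p : nat) (x : Zpadic p) : R :=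
  padic_absdiff R x (Zp0 p).

(* G_l = Z_p / p^l Z_p, elements I = I_0 + I_1 p + ... + I_{l-1} p^{l-1} *)
Definition G (p l : nat) := {ffun 'I_l -> digit p}.

Definition emb (p l : nat) (I : G p l) : Zpadic p :=
  fun j => match @insub nat (fun j => (j < l)%N) 'I_l j with
           | Some k => I k | None => ord0 end.

(* the ball I + p^l Z_p ; Omega(p^l |x - I|_p) is its indicator *)
Definition ballG (p l : nat) (I : G p l) : set (Zpadic p) :=
  [set x | forall j : 'I_l, x j = I j].

Definition G0 (p l : nat) : G p l := [ffun => ord0].

Definition Zp_balls (p : nat) : set (set (Zpadic p)) :=
  [set B | exists l (I : G p l), B = ballG I].

(* Z_p with the Borel sigma-algebra (generated by the Zp_balls) *)
Definition ZpM (p : nat) := g_sigma_algebraType (@Zp_balls p).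

Definition is_haar (R : realType) (p : nat)
  (mu : {measure set (ZpM p) -> \bar R}) : Prop :=
  forall l (I : G p l), mu (ballG I) = ((p%:R ^- l : R)%:E).

Definition Jconv (R : realType) (p : nat) (mu : {measure set (ZpM p) -> \bar R})
  (J : R -> R) (phi : Zpadic p -> R[i]) (x : Zpadic p) : R[i] :=
  Complex (Rintegral mu setT (fun y : ZpM p => J (padic_absdiff R x y) * complex.Re (phi y)))
          (Rintegral mu setT (fun y : ZpM p => J (padic_absdiff R x y) * complex.Im (phi y))).

Definition Jop (R : realType) (p : nat) (mu : {measure set (ZpM p) -> \bar R})
  (J : R -> R) (phi : Zpadic p -> R[i]) : Zpadic p -> R[i] :=
  fun x => Jconv mu J phi x - phi x.

Definition inD (R : realType) (p l : nat) (phi : Zpadic p -> R[i]) : Prop :=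
  exists c : G p l -> R[i],
    forall x, phi x = \sum_(I : G p l) c I * (\1_(ballG I) x : R)%:C.

Definition Jmat (R : realType) (p : nat) (mu : {measure set (ZpM p) -> \bar R})
  (J : R -> R) (l : nat) (I K : G p l) : R :=
  if I == K then Rintegral mu (ballG (G0 p l) : set (ZpM p))
                   (fun y => J (padic_abs R y)) - 1
  else p%:R ^- l * J (padic_absdiff R (emb I) (emb K)).

From Pilot Require Import Defs.
From HB Require Import structures.
From mathcomp Require Import all_boot all_order all_algebra.
From mathcomp Require Import all_classical all_reals all_analysis.
From mathcomp Require Import complex measurable_realfun.
Import Order.TTheory GRing.Theory Num.Theory numFieldNormedType.Exports.
Set Implicit Arguments. Unset Strict Implicit. Unset Printing Implicit Defensive.
Local Open Scope classical_set_scope.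
Local Open Scope ring_scope.

(* For x in the ball I + p^l Z_p and K <> I, every y in K + p^l Z_p satisfies
   |x - y|_p = |I - K|_p, so J(|x - y|_p) is constant on that ball, whose Haar
   measure is p^-l.  The ball of x itself is {x} together with the spheres
   |x - y|_p = p^-n, n >= l, of measure p^-n - p^-(n+1), on each of which
   J(|x - y|_p) is constant; the resulting series does not depend on x, so the
   integral over the ball of x equals the integral over p^l Z_p for x = 0.
   For l = 0 the same computation shows that J(|x - .|_p) has integral 1, hence
   is integrable, which makes the convolution linear on the span of the
   indicators of the balls. *)

Lemma exists_exprVn_le (R : archiNumFieldType) (q : nat) (e : R) :
  (1 < q)%N -> 0 < e -> exists n, q%:R ^- n <= e.
Proof.
move=> q_gt1 e_gt0; set n := Num.bound e^-1; exists n.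
have q_pos : 0 < q%:R ^+ n :> R by rewrite exprn_gt0 // ltr0n ltnW.
rewrite invf_ple ?posrE // -natrX.
have /ltW/le_trans -> // : e^-1 < n%:R by apply: archi_boundP; rewrite invr_ge0 ltW.
by rewrite ler_nat ltnW // ltn_expl.
Qed.

Lemma sum_delta_mul (V : pzRingType) (I : finType) (i : I) (c : I -> V) :
  \sum_j (i == j)%:R * c j = c i.
Proof.
rewrite (bigD1 i) //= eqxx mul1r big1 ?addr0 // => j ji.
by rewrite eq_sym (negPf ji) mul0r.
Qed.

Section RintegralSum.
Context d (T : measurableType d) (R : realType) (mu : {measure set T -> \bar R}).

Lemma Rintegral_sum (I : Type) (s : seq I) (F : I -> T -> R) (D : set T) :
  measurable D -> (forall i, mu.-integrable D (EFin \o F i)) ->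
  \int[mu]_(x in D) \sum_(i <- s) F i x = \sum_(i <- s) \int[mu]_(x in D) F i x.
Proof.
move=> mD intF; rewrite /Rintegral.
under eq_integral => x _ do rewrite -sumEFin.
rewrite integral_sum // (eq_bigr (fun i => (fine (\int[mu]_(x in D) (F i x)%:E))%:E)).
  by rewrite sumEFin.
by move=> i _; rewrite fineK //; have := integrable_fin_num mD (intF i).
Qed.

Lemma Rintegral_mul_sum_indic (I : finType) (A : I -> set T) (r : I -> R) (f : T -> R) :
  (forall i, measurable (A i)) -> mu.-integrable setT (EFin \o f) ->
  \int[mu]_x (f x * \sum_i r i * \1_(A i) x) = \sum_i r i * \int[mu]_(x in A i) f x.
Proof.
move=> mA intf.
have fA i : (fun x => f x * (r i * \1_(A i) x)) = (fun x => r i * (f \_ (A i)) x).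
  by apply/funext => x; rewrite patchE indicE; case: ifP; rewrite ?mulr1 ?mulr0 // mulrC.
have intfA i : mu.-integrable setT (EFin \o f \_ (A i)).
  by rewrite -restrict_EFin -integrable_mkcond //; exact: integrableS intf.
under eq_Rintegral do rewrite mulr_sumr.
rewrite Rintegral_sum // => [|i]; last first.
  by rewrite fA; apply: (integrableZl measurableT (r i)) (intfA i).
by apply: eq_bigr => i _; rewrite fA (RintegralZl _ measurableT (intfA i)) -Rintegral_mkcond.
Qed.

End RintegralSum.

Section ComplexSums.
Variable R : realType.
Local Open Scope complex_scope.
Implicit Types (c : R[i]) (t : R).

Lemma Re_mul_real c t : complex.Re (c * t%:C) = complex.Re c * t.
Proof. by case: c => a b /=; rewrite mulr0 subr0. Qed.

Lemma Im_mul_real c t : complex.Im (c * t%:C) = complex.Im c * t.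
Proof. by case: c => a b /=; rewrite mulr0 add0r. Qed.

Lemma complex_sum_real_mul (I : finType) (a : I -> R) (c : I -> R[i]) :
  Complex (\sum_i complex.Re (c i) * a i) (\sum_i complex.Im (c i) * a i) =
  \sum_i (a i)%:C * c i.
Proof.
apply/eqP; rewrite eq_complex /= !raddf_sum; apply/andP; split; apply/eqP.
  by apply: eq_bigr => i _; rewrite -Re_mul_real mulrC.
by apply: eq_bigr => i _; rewrite -Im_mul_real mulrC.
Qed.

End ComplexSums.

Section PadicBalls.
Variable p : nat.
Implicit Types (x y : Zpadic p) (m n : nat).

Definition pball x m : set (ZpM p) := [set y | congr_upto x y m].

Definition trunc x m : G p m := [ffun j : 'I_m => x j].

Lemma pballE x m : pball x m = ballG (trunc x m).
Proof.
apply/seteqP; split => y /= xy j; first by rewrite ffunE xy.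
by move=> jm; have := xy (Ordinal jm); rewrite ffunE.
Qed.

Lemma measurable_ballG l (I : G p l) : measurable (ballG I : set (ZpM p)).
Proof. by apply: sub_sigma_algebra; exists l, I. Qed.

Lemma measurable_pball x m : measurable (pball x m).
Proof. by rewrite pballE; exact: measurable_ballG. Qed.

Lemma pball0 x : pball x 0 = setT.
Proof. by apply/seteqP; split => y // _ j. Qed.

Lemma congr_upto_le x y m n : (m <= n)%N -> congr_upto x y n -> congr_upto x y m.
Proof. by move=> mn xy j jm; apply: xy; exact: leq_trans jm mn. Qed.

Lemma congr_uptoC x y n : congr_upto x y n -> congr_upto y x n.
Proof. by move=> xy j jn; rewrite xy. Qed.

Lemma congr_upto_all x y : (forall n, congr_upto x y n) -> x = y.
Proof. by move=> xy; apply/funext => j; exact: xy j.+1 j (ltnSn j). Qed.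

Definition sphere x n : set (ZpM p) := pball x n `\` pball x n.+1.

Lemma sphere_congr_upto x y n : sphere x n y ->
  forall k, congr_upto x y k <-> (k <= n)%N.
Proof.
move=> [xyn xyn1] k; split => [xyk|kn]; last exact: congr_upto_le kn xyn.
by rewrite leqNgt; apply/negP => nk; apply: xyn1; exact: congr_upto_le nk xyk.
Qed.

Lemma eq_or_sphere x y : y = x \/ exists n, sphere x n y.
Proof.
have [/congr_upto_all ->|] := pselect (forall n, congr_upto x y n); first by left.
move=> /existsNP[k /asboolPn xyk]; right.
have ex : exists k, ~~ `[< congr_upto x y k >] by exists k.
case: (ex_minnP ex) => -[|n] /asboolPn xyn minn.
  by exfalso; apply: xyn => j.
exists n; split => //; apply: contrapT => /asboolPn/minn.
by rewrite ltnn.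
Qed.

Lemma sphere_inj x y m n : sphere x m y -> sphere x n y -> m = n.
Proof.
move=> xym xyn; apply/eqP; rewrite eqn_leq.
apply/andP; split; first by apply/(sphere_congr_upto xyn); case: xym.
by apply/(sphere_congr_upto xym); case: xyn.
Qed.

Lemma sphere_center x n : ~ sphere x n x.
Proof. by case=> _; apply. Qed.

End PadicBalls.

Section BallsOfLevel.
Variables (p l : nat).
Implicit Types (I K : G p l) (x y : Zpadic p).

Lemma ballG_emb I : ballG I (emb I).
Proof. by move=> j; rewrite /emb valK. Qed.

Lemma ballG_trunc x : ballG (trunc x l) x.
Proof. by move=> j; rewrite ffunE. Qed.

Lemma ballG_G0 : ballG (G0 p l) (Defs.Zp0 p).
Proof. by move=> j; rewrite ffunE. Qed.

Lemma ballG_inj x I K : ballG I x -> ballG K x -> I = K.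
Proof. by move=> xI xK; apply/ffunP => j; rewrite -xI -xK. Qed.

Lemma ballG_pball x I : ballG I x -> ballG I = pball x l.
Proof. by move=> xI; rewrite pballE (ballG_inj (ballG_trunc x) xI). Qed.

Lemma congr_upto_ballG I K x y n : I != K -> ballG I x -> ballG K y ->
  congr_upto x y n <-> (forall j : 'I_l, (j < n)%N -> I j = K j).
Proof.
move=> IK xI yK; split=> [xy j jn|IKn j jn]; first by rewrite -xI -yK xy.
have jl : (j < l)%N.
  rewrite ltnNge; apply/negP => lj; move/eqP: IK; apply; apply/ffunP => i.
  by apply: IKn; exact: leq_trans (ltn_ord i) (leq_trans lj (ltnW jn)).
by have := IKn (Ordinal jl) jn; rewrite -xI -yK.
Qed.

End BallsOfLevel.

Section PadicAbsdiff.
Variables (R : realType) (p : nat).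
Implicit Types x y : Zpadic p.

Lemma eq_padic_absdiff x y x' y' :
  (forall n, congr_upto x y n <-> congr_upto x' y' n) ->
  padic_absdiff R x y = padic_absdiff R x' y'.
Proof.
move=> xy; rewrite /padic_absdiff; congr inf.
by apply/seteqP; split => _ [n /xy xyn <-]; exists n.
Qed.

Lemma padic_absdiffC x y : padic_absdiff R x y = padic_absdiff R y x.
Proof. by apply: eq_padic_absdiff => n; split; exact: congr_uptoC. Qed.

Lemma padic_absdiff_ge0_le1 x y : 0 <= padic_absdiff R x y <= 1.
Proof.
rewrite /padic_absdiff; set S := (X in inf X).
have S_ge0 : lbound S 0 by move=> _ [k _ <-]; rewrite invr_ge0 exprn_ge0.
have S1 : S 1 by exists 0%N; rewrite // expr0 invr1.
apply/andP; split; first by apply: lb_le_inf S_ge0; exists 1.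
by apply: (ge_inf _ S1); exists 0.
Qed.

(* The value of [|x - y|_p] on [sphere x n]; it equals [p ^- n] for [p > 1],
   but only its independence of [x] matters. *)
Definition sphere_abs n : R := inf [set p%:R ^- k | k in [set k | (k <= n)%N]].

Lemma padic_absdiff_sphere x y n : sphere x n y -> padic_absdiff R x y = sphere_abs n.
Proof.
move=> xy; rewrite /padic_absdiff /sphere_abs; congr inf.
by apply/seteqP; split => _ [k /(sphere_congr_upto xy) kn <-]; exists k.
Qed.

Lemma padic_absdiffxx x x' : padic_absdiff R x x = padic_absdiff R x' x'.
Proof. by apply: eq_padic_absdiff. Qed.

Lemma padic_absdiff_ballG l (I K : G p l) (x y : Zpadic p) :
  I != K -> ballG I x -> ballG K y ->
  padic_absdiff R x y = padic_absdiff R (emb I) (emb K).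
Proof.
move=> IK xI yK; apply: eq_padic_absdiff => n.
by rewrite (congr_upto_ballG n IK xI yK) (congr_upto_ballG n IK (ballG_emb I) (ballG_emb K)).
Qed.

End PadicAbsdiff.

Section HaarKernel.
Variables (R : realType) (p : nat) (mu : {measure set (ZpM p) -> \bar R}).
Hypotheses (hp : prime p) (Hmu : is_haar mu).
Variable J : R -> R.
Hypothesis J_ge0 : forall r : R, 0 <= r <= 1 -> 0 <= J r.
Implicit Types (x y : Zpadic p) (m k : nat).
Local Open Scope ereal_scope.

Definition Jker x : ZpM p -> \bar R := fun y => (J (padic_absdiff R x y))%:E.

Lemma Jker_ge0 x y : 0 <= Jker x y.
Proof. by rewrite lee_fin; apply: J_ge0; exact: padic_absdiff_ge0_le1. Qed.

Definition pball_piece x m k : set (ZpM p) :=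
  if k is k.+1 then sphere x (m + k) else [set x].

Definition piece_value m k : \bar R :=
  (J (if k is k.+1 then sphere_abs R p (m + k) else padic_abs R (Defs.Zp0 p)))%:E.

Definition piece_measure m k : \bar R :=
  if k is k.+1 then (p%:R ^- (m + k) - p%:R ^- (m + k).+1)%:E else 0.

Lemma Jker_piece x m k y : pball_piece x m k y -> Jker x y = piece_value m k.
Proof.
case: k => [|k] /= xy; rewrite /Jker; last by rewrite (padic_absdiff_sphere R xy).
by rewrite xy (padic_absdiffxx R x (Defs.Zp0 p)).
Qed.

Lemma pball_bigcup x m : pball x m = \bigcup_k pball_piece x m k.
Proof.
apply/seteqP; split => y.
  move=> xy; have [->|[n xyn]] := eq_or_sphere x y; first by exists 0%N.
  have mn : (m <= n)%N by apply/(sphere_congr_upto xyn).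
  by exists (n - m).+1 => //=; rewrite subnKC.
move=> [[|k] _ /= xy]; first by rewrite xy => j.
by case: xy => xy _; exact: congr_upto_le (leq_addr k m) xy.
Qed.

Lemma trivIset_pball_piece x m : trivIset setT (pball_piece x m).
Proof.
move=> [|i] [|j] _ _ [y [/= xyi xyj]] //.
- by rewrite xyi in xyj; case: (sphere_center xyj).
- by rewrite xyj in xyi; case: (sphere_center xyi).
- by rewrite (addnI (sphere_inj xyi xyj)).
Qed.

Lemma measurable_singleton x : measurable [set x : ZpM p].
Proof.
have -> : [set x : ZpM p] = \bigcap_n pball x n.
  apply/seteqP; split => [y -> n _ j //|y xy].
  by apply/esym/congr_upto_all => n; exact: xy.
exact: bigcapT_measurable (measurable_pball x).
Qed.

Lemma measurable_pball_piece x m k : measurable (pball_piece x m k).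
Proof.
case: k => [|k]; first exact: measurable_singleton.
by apply: measurableD; exact: measurable_pball.
Qed.

Lemma measurable_Jker x (D : set (ZpM p)) : measurable_fun D (Jker x).
Proof.
move=> mD Y mY; apply: measurableI => //.
have -> : Jker x @^-1` Y =
    \bigcup_(k in [set k | Y (piece_value 0 k)]) pball_piece x 0 k.
  apply/seteqP; split => [y Yxy|y [k /= Yk /Jker_piece xy]]; last by rewrite /preimage /= xy.
  have : pball x 0 y by rewrite pball0.
  by rewrite pball_bigcup => -[k _ /[dup] /Jker_piece xyk]; exists k; rewrite //= -xyk.
by apply: bigcup_measurable => k _; exact: measurable_pball_piece.
Qed.

Lemma haar_pball x m : mu (pball x m) = (p%:R ^- m)%:E.
Proof. by rewrite pballE Hmu. Qed.

Lemma haar_singleton x : mu [set x] = 0.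
Proof.
have mu_le n : mu [set x] <= (p%:R ^- n)%:E.
  rewrite -(haar_pball x n); apply: le_measure; rewrite ?inE.
  - exact: measurable_singleton.
  - exact: measurable_pball.
  - by move=> _ -> j.
have mu_fin : mu [set x] \is a fin_num.
  by rewrite ge0_fin_numE // (le_lt_trans (mu_le 0%N)) ?ltry.
rewrite -(fineK mu_fin); congr EFin; apply/eqP; rewrite eq_le fine_ge0 // andbT.
apply/ler_addgt0Pr => e /(exists_exprVn_le (prime_gt1 hp))[n pn_le].
by rewrite add0r (le_trans _ pn_le) // -lee_fin fineK.
Qed.

Lemma haar_pball_piece x m k : mu (pball_piece x m k) = piece_measure m k.
Proof.
case: k => [|k] /=; first exact: haar_singleton.
(* [measureD] exposes [mu] through another structure projection, on which
   [haar_pball] does not rewrite; hence the right-to-left rewrites. *)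
rewrite EFinB -!(haar_pball x) measureD ?setIidr //.
- by move=> y; exact: congr_upto_le (leqnSn _).
- exact: measurable_pball.
- exact: measurable_pball.
- by have := ltry (p%:R ^- (m + k) : R); rewrite -(haar_pball x).
Qed.

Lemma integral_Jker_pball_piece x m k :
  \int[mu]_(y in pball_piece x m k) Jker x y = piece_value m k * piece_measure m k.
Proof.
rewrite (eq_integral (cst (piece_value m k))) => [|y /set_mem /Jker_piece //].
by rewrite integral_cst ?haar_pball_piece //; exact: measurable_pball_piece.
Qed.

(* The right-hand side does not depend on [x]; this replaces the translation
   invariance of [mu]. *)
Lemma integral_Jker_pball x m :
  \int[mu]_(y in pball x m) Jker x y =
  \sum_(k <oo) piece_value m k * piece_measure m k.
Proof.
rewrite pball_bigcup ge0_integral_bigcup //=.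
- by apply: eq_eseriesr => k _; exact: integral_Jker_pball_piece.
- exact: measurable_pball_piece.
- exact: measurable_Jker.
- by move=> y _; exact: Jker_ge0.
- exact: trivIset_pball_piece.
Qed.

Lemma integral_Jker_pball_Zp0 x m :
  \int[mu]_(y in pball x m) Jker x y = \int[mu]_(y in pball (Defs.Zp0 p) m) (J (padic_abs R y))%:E.
Proof.
rewrite integral_Jker_pball -(integral_Jker_pball (Defs.Zp0 p)).
by apply: eq_integral => y _; rewrite /Jker padic_absdiffC.
Qed.

Lemma Rintegral_Jker_ballG l (I K : G p l) x : ballG I x ->
  (\int[mu]_(y in ballG K) J (padic_absdiff R x y) = Jmat mu J I K + (I == K)%:R)%R.
Proof.
move=> xI; rewrite /Jmat; have [<-|IK] := eqVneq I K.
  rewrite subrK /Rintegral (ballG_pball xI) (ballG_pball (@ballG_G0 p l)).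
  by congr fine; exact: integral_Jker_pball_Zp0.
rewrite addr0 (eq_Rintegral mu (g := fun=> J (padic_absdiff R (emb I) (emb K)))).
  rewrite Rintegral_cst; last exact: measurable_ballG.
  by rewrite (Hmu K) mulrC.
by move=> y /set_mem yK; rewrite (padic_absdiff_ballG R IK xI yK).
Qed.

Hypothesis J_int1 : \int[mu]_x (J (padic_abs R x))%:E = 1.

Lemma integrable_Jker x : mu.-integrable setT (Jker x).
Proof.
apply/integrableP; split; first exact: measurable_Jker.
rewrite (eq_integral (Jker x)) => [|y _]; last by rewrite gee0_abs ?Jker_ge0.
by rewrite -(pball0 x) integral_Jker_pball_Zp0 pball0 J_int1 ltry.
Qed.

End HaarKernel.

Section JopOnDl.
Local Open Scope complex_scope.
Variables (R : realType) (p : nat) (mu : {measure set (ZpM p) -> \bar R}).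

Lemma sum_indic_ballG l (c : G p l -> R[i]) (I : G p l) x :
  ballG I x -> \sum_K c K * (\1_(ballG K) x : R)%:C = c I.
Proof.
move=> xI; rewrite (bigD1 I) //= big1 ?indicE ?mem_set // ?rmorph1 ?mulr1 ?addr0 //.
move=> K KI; rewrite indicE memNset ?rmorph0 ?mulr0 // => xK.
by move/eqP: KI; apply; exact: ballG_inj xK xI.
Qed.

Hypotheses (hp : prime p) (Hmu : is_haar mu).
Variable J : R -> R.
Hypothesis J_ge0 : forall r : R, 0 <= r <= 1 -> 0 <= J r.
Hypothesis J_int1 : (\int[mu]_x (J (padic_abs R x))%:E = 1)%E.
Variables (l : nat) (phi : Zpadic p -> R[i]) (c : G p l -> R[i]).
Hypothesis phiE : forall x, phi x = \sum_K c K * (\1_(ballG K) x : R)%:C.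

Lemma Jop_ballG I x : ballG I x -> Jop mu J phi x = \sum_K (Jmat mu J I K)%:C * c K.
Proof.
move=> xI.
have ReE y : complex.Re (phi y) = \sum_K complex.Re (c K) * \1_(ballG K) y.
  by rewrite phiE raddf_sum; apply: eq_bigr => K _; rewrite -Re_mul_real.
have ImE y : complex.Im (phi y) = \sum_K complex.Im (c K) * \1_(ballG K) y.
  by rewrite phiE raddf_sum; apply: eq_bigr => K _; rewrite -Im_mul_real.
have Jint : mu.-integrable setT (EFin \o fun y => J (padic_absdiff R x y)).
  exact: integrable_Jker.
have mK K : measurable (ballG K : set (ZpM p)) by exact: measurable_ballG.
rewrite /Jop /Jconv.
under eq_Rintegral do rewrite ReE.
under [X in Complex _ X]eq_Rintegral do rewrite ImE.
rewrite !Rintegral_mul_sum_indic // complex_sum_real_mul.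
under eq_bigr => K _ do
  rewrite (Rintegral_Jker_ballG hp Hmu J_ge0 K xI) rmorphD rmorph_nat mulrDl.
by rewrite big_split /= sum_delta_mul (phiE x) (sum_indic_ballG c xI) addrK.
Qed.

End JopOnDl.

Local Open Scope complex_scope.
Unset Implicit Arguments.

Theorem lemma9 (R : realType) (p : nat) (hp : prime p)
  (mu : {measure set (ZpM p) -> \bar R}) (Hmu : is_haar mu)
  (J : R -> R) (HJ : forall r : R, 0 <= r <= 1 -> 0 <= J r)
  (HJ1 : (\int[mu]_x (J (padic_abs R x))%:E = 1%:E)%E)
  (l : nat) (hl : (1 <= l)%N) :
  (forall phi : Zpadic p -> R[i], inD l phi -> inD l (Jop mu J phi)) /\
  (forall phi : Zpadic p -> R[i], inD l phi ->
     forall I : G p l,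
       Jop mu J phi (emb I) = \sum_(K : G p l) (Jmat mu J I K)%:C * phi (emb K)).
Proof.
split=> phi [c phiE].
  exists (fun I => \sum_K (Jmat mu J I K)%:C * c K) => x.
  rewrite (Jop_ballG hp Hmu HJ HJ1 phiE (ballG_trunc x)).
  by rewrite (sum_indic_ballG _ (ballG_trunc x)).
move=> I; rewrite (Jop_ballG hp Hmu HJ HJ1 phiE (ballG_emb I)).
by apply: eq_bigr => K _; rewrite phiE (sum_indic_ballG _ (ballG_emb K)).
Qed.
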